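(* Let $r,s,t,a,b,c$ be real numbers with $t\neq0$, and let $M_{H,n}^{(3)}$, $M_{h,n}^{(3)}$ be the matrix sequences defined in the context. Then for all nonnegative integers $m,n$: (i) $M_{h,n}^{(3)}M_{h,m}^{(3)}=M_{h,m}^{(3)}M_{h,n}^{(3)}=M_{h,n+m}^{(3)}$; (ii) $M_{H,n}^{(3)}M_{H,m}^{(3)}=M_{H,m}^{(3)}M_{H,n}^{(3)}$; (iii) $M_{H,1}^{(3)}M_{h,n}^{(3)}=M_{H,n}^{(3)}M_{h,1}^{(3)}=M_{H,n+1}^{(3)}$; (iv) $M_{H,n}^{(3)}M_{h,1}^{(3)}=M_{h,1}^{(3)}M_{H,n}^{(3)}=M_{H,n+1}^{(3)}$; (v) $M_{h,n}^{(3)}M_{H,n+1}^{(3)}=M_{H,2n+1}^{(3)}$.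
   Context: The third-order Horadam matrix sequence is the sequence of $3\times3$ matrices defined by $M_{H,n+3}^{(3)}=rM_{H,n+2}^{(3)}+sM_{H,n+1}^{(3)}+tM_{H,n}^{(3)}$ ($n\ge0$) with $M_{H,0}^{(3)}=\begin{pmatrix} b & c-rb & ta\\ a & b-ra & c-rb-sa\\ \frac{1}{t}(c-rb-sa) & a-\frac{r}{t}(c-rb-sa) & \frac1t\big(-sc+(t+rs)b+(s^2-rt)a\big)\end{pmatrix}$, $M_{H,1}^{(3)}=\begin{pmatrix} c & sb+ta & tb\\ b & c-rb & ta\\ a & b-ra & c-rb-sa\end{pmatrix}$, $M_{H,2}^{(3)}=\begin{pmatrix} rc+sb+ta & sc+tb & tc\\ c & sb+ta & tb\\ b & c-rb & ta\end{pmatrix}$. The generalized Tribonacci matrix sequence satisfies the same recurrence with $M_{h,0}^{(3)}=I_3$, $M_{h,1}^{(3)}=\begin{pmatrix} r&s&t\\1&0&0\\0&1&0\end{pmatrix}$, $M_{h,2}^{(3)}=\begin{pmatrix} r^2+s&rs+t&rt\\ r&s&t\\ 1&0&0\end{pmatrix}$. *)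

From HB Require Import structures.
From mathcomp Require Import all_boot all_order all_algebra.
From mathcomp Require Import reals.
Set Implicit Arguments. Unset Strict Implicit. Unset Printing Implicit Defensive.
Import Order.TTheory GRing.Theory Num.Theory.
Local Open Scope ring_scope.

(* Sequence of 3x3 matrices satisfying X_{n+3} = r X_{n+2} + s X_{n+1} + t X_n,
   with initial values X0, X1, X2. *)
Definition trib_mx {R : pzRingType} (r s t : R) (X0 X1 X2 : 'M[R]_3) (n : nat)
  : 'M[R]_3 :=
  (iter n (fun T : 'M[R]_3 * 'M[R]_3 * 'M[R]_3 =>
             let: (A, B, C) := T in (B, C, r *: C + s *: B + t *: A))
        (X0, X1, X2)).1.1.

Definition mx3 {R : pzRingType} (L : seq (seq R)) : 'M[R]_3 :=
  \matrix_(i < 3, j < 3) nth 0 (nth [::] L i) j.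

Section Mats.
Variable R : realType.
Variables r s t a b c : R.

Definition MH0 : 'M[R]_3 :=
  mx3
   [:: [:: b; c - r * b; t * a];
       [:: a; b - r * a; c - r * b - s * a];
       [:: t^-1 * (c - r * b - s * a); a - r / t * (c - r * b - s * a);
           t^-1 * (- s * c + (t + r * s) * b + (s ^+ 2 - r * t) * a)]].

Definition MH1 : 'M[R]_3 :=
  mx3
   [:: [:: c; s * b + t * a; t * b];
       [:: b; c - r * b; t * a];
       [:: a; b - r * a; c - r * b - s * a]].

Definition MH2 : 'M[R]_3 :=
  mx3
   [:: [:: r * c + s * b + t * a; s * c + t * b; t * c];
       [:: c; s * b + t * a; t * b];
       [:: b; c - r * b; t * a]].

Definition Mh1 : 'M[R]_3 :=
  mx3
   [:: [:: r; s; t]; [:: 1; 0; 0]; [:: 0; 1; 0]].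

Definition Mh2 : 'M[R]_3 :=
  mx3
   [:: [:: r ^+ 2 + s; r * s + t; r * t]; [:: r; s; t]; [:: 1; 0; 0]].

Definition MH (n : nat) : 'M[R]_3 := trib_mx r s t MH0 MH1 MH2 n.
Definition Mh (n : nat) : 'M[R]_3 := trib_mx r s t 1%:M Mh1 Mh2 n.
End Mats.

(* Both sequences are geometric in the companion matrix A := M_{h,1}: A satisfies
   A^3 = r A^2 + s A + t, so M_{h,n} = A^n and M_{H,n} = M_{H,0} A^n.  Since t != 0,
   M_{H,0} commutes with A, and every identity reduces to adding exponents of A. *)
From HB Require Import structures.
From mathcomp Require Import all_boot all_order all_algebra.
From mathcomp Require Import reals.
From mathcomp Require Import ring zify.
Import GRing.Theory.
Local Open Scope ring_scope.

Lemma trib_mx_geom {R : comNzRingType} {r s t : R} (X A : 'M[R]_3) (n : nat) :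
  A ^+ 3 = r *: A ^+ 2 + s *: A + t *: 1 ->
  trib_mx r s t X (X * A) (X * A ^+ 2) n = X * A ^+ n.
Proof.
move=> A3; rewrite /trib_mx.
suff -> : forall k, iter k (fun T : 'M[R]_3 * 'M[R]_3 * 'M[R]_3 =>
             let: (A, B, C) := T in (B, C, r *: C + s *: B + t *: A))
        (X, X * A, X * A ^+ 2) = (X * A ^+ k, X * A ^+ k.+1, X * A ^+ k.+2) by [].
elim=> [|k IH]; first by rewrite expr0 mulr1 expr1.
have Ak3 : A ^+ k.+3 = r *: A ^+ k.+2 + s *: A ^+ k.+1 + t *: A ^+ k.
  by rewrite -[k.+3]addn3 exprD A3 !mulrDr -!scalerAr mulr1 -exprSr -exprD addn2.
by rewrite iterS IH /= Ak3 !mulrDr -!scalerAr.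
Qed.

Ltac mx3_entrywise :=
  rewrite -?mulmxE /Mh1 /Mh2 /MH0 /MH1 /MH2 /mx3;
  apply/matrixP; case=> [[|[|[|?]]] ?] //; case=> [[|[|[|?]]] ?] //;
  repeat rewrite ?mxE ?big_ord_recl ?big_ord0 /=.

Section CompanionMatrix.
Variables (R : realType) (r s t a b c : R).
Hypothesis t_neq0 : t != 0.

Local Notation A := (Mh1 r s t).
Local Notation X := (MH0 r s t a b c).

Lemma Mh1_cubic : A ^+ 3 = r *: A ^+ 2 + s *: A + t *: 1.
Proof. rewrite !exprS expr0 !mulr1; mx3_entrywise; ring. Qed.

Lemma Mh2E : Mh2 r s t = A ^+ 2.
Proof. rewrite expr2; mx3_entrywise; ring. Qed.

Lemma MH1E : MH1 r s t a b c = X * A.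
Proof. mx3_entrywise; by field. Qed.

Lemma MH2E : MH2 r s t a b c = X * A ^+ 2.
Proof. rewrite expr2 mulrA -MH1E; mx3_entrywise; ring. Qed.

Lemma MH0_Mh1_comm : GRing.comm X A.
Proof. mx3_entrywise; by field. Qed.

Lemma MhE (n : nat) : Mh r s t n = A ^+ n.
Proof.
rewrite /Mh Mh2E.
by have := trib_mx_geom 1 A n Mh1_cubic; rewrite !mul1r.
Qed.

Lemma MHE (n : nat) : MH r s t a b c n = X * A ^+ n.
Proof. by rewrite /MH MH1E MH2E trib_mx_geom // Mh1_cubic. Qed.

End CompanionMatrix.

Theorem lemma3p1 (R : realType) (r s t a b c : R) (ht : t != 0) (m n : nat) :
  [/\ Mh r s t n *m Mh r s t m = Mh r s t (n + m)
      /\ Mh r s t m *m Mh r s t n = Mh r s t (n + m),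
    MH r s t a b c n *m MH r s t a b c m = MH r s t a b c m *m MH r s t a b c n,
    MH r s t a b c 1 *m Mh r s t n = MH r s t a b c (n + 1)
      /\ MH r s t a b c n *m Mh r s t 1 = MH r s t a b c (n + 1),
    MH r s t a b c n *m Mh r s t 1 = MH r s t a b c (n + 1)
      /\ Mh r s t 1 *m MH r s t a b c n = MH r s t a b c (n + 1)
    & Mh r s t n *m MH r s t a b c n.+1 = MH r s t a b c (2 * n + 1)].
Proof.
rewrite !mulmxE !MhE !MHE //.
set A := Mh1 r s t; set X := MH0 r s t a b c.
have AkX k : A ^+ k * X = X * A ^+ k.
  by apply/esym/commrX/MH0_Mh1_comm.
split.
- by split; rewrite -exprD // addnC.
- by rewrite -!mulrA !(mulrA (A ^+ _)) !AkX -!mulrA -!exprD addnC.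
- by split; rewrite -!mulrA -exprD // addnC.
- by split; rewrite ?mulrA ?AkX -mulrA -exprD // addnC.
- by rewrite mulrA AkX -mulrA -exprD; congr (_ * A ^+ _); lia.
Qed.
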